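(* Let $m\ge 2$ be an integer, let $\lambda_1,\dots,\lambda_m>0$, and let $X_1,\dots,X_m$ be independent random variables with $X_i\sim\mathrm{Pois}(\lambda_i)$. For $n\ge1$ define $p_n^{(m)}=\mathbb{P}(X_1\cdots X_m\ge n)$. Then, as $n\to\infty$, \[ p_n^{(m)}=(2\pi)^{(m-1)/2}\,n^{(m-1)/(2m)}\exp\bigl(-n^{1/m}\log n+O(n^{1/m})\bigr), \] and in particular $\log p_n^{(m)}=-n^{1/m}\log n+O(n^{1/m})$.
   Context: $\log$ denotes the natural logarithm. $\mathrm{Pois}(\lambda)$ is the Poisson distribution with mean $\lambda$. *)

From HB Require Import structures.
From mathcomp Require Import all_boot all_order all_algebra.
From mathcomp Require Import all_classical all_reals all_analysis.
Set Implicit Arguments. Unset Strict Implicit. Unset Printing Implicit Defensive.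
Import Order.TTheory GRing.Theory Num.Theory.
Local Open Scope classical_set_scope.
Local Open Scope ring_scope.

(* Mutual independence of a finite family of real random variables:
   for every family of Borel sets B_i, the joint probability factors.
   (Sub-families are covered by taking B_i = setT.) *)
Definition mutually_independent {d : measure_display} {T : measurableType d}
  {R : realType} (P : probability T R) (m : nat) (X : 'I_m -> {RV P >-> R}) :=
  forall B : 'I_m -> set R, (forall i, measurable (B i)) ->
    P (\bigcap_(i in [set: 'I_m]) (X i @^-1` B i)) =
    (\prod_(i < m) P (X i @^-1` B i))%E.

Definition poisson_distributed_RV {d : measure_display} {T : measurableType d}
  {R : realType} (P : probability T R) (lam : R) (X : {RV P >-> R}) :=
  forall k : nat, P (X @^-1` [set k%:R]) = (poisson_pmf lam k)%:E.

Definition prod_tail {d : measure_display} {T : measurableType d}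
  {R : realType} (P : probability T R) (m : nat) (X : 'I_m -> {RV P >-> R})
  (n : nat) : R :=
  fine (P [set w | n%:R <= \prod_(i < m) X i w]).

Arguments mutually_independent {d T R} P {m} X.
Arguments poisson_distributed_RV {d T R} P lam X.
Arguments prod_tail {d T R} P {m} X n.

From HB Require Import structures.
From mathcomp Require Import all_boot all_order all_algebra.
From mathcomp Require Import all_classical all_reals all_analysis.
From mathcomp Require Import ring lra.
Set Implicit Arguments. Unset Strict Implicit. Unset Printing Implicit Defensive.
Import Order.TTheory GRing.Theory Num.Theory.
Local Open Scope classical_set_scope.
Local Open Scope ring_scope.

(* Write a = n^(1/m).  Lower bound: with k = floor a + 1 the point event
   X_1 = ... = X_m = k lies in {X_1 ... X_m >= n}, and k! <= k^k gives it
   probability at least exp (- m k ln k - O(k)) = exp (- a ln n - O(a)).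
   Upper bound: apart from the events {X_i >= n}, of probability at most
   lam_i^n / n!, the product event is covered by the at most n^m points t of
   [0, n)^m with t_1 ... t_m >= n.  Since t^t <= e^t t!, such a point has
   probability at most exp (sum_i t_i (1 + L) - sum_i t_i ln t_i) when all
   lam_i <= e^L; Chebyshev's sum inequality and AM-GM give
   sum_i t_i ln t_i >= (sum_i t_i / m) ln n with sum_i t_i / m >= a, so every
   term is at most exp (- a (ln n - m (1 + L))), and the number of terms only
   costs a factor exp (O(ln n)).  Hence ln p_n = - a ln n + O(a); the
   prefactor (2 pi)^((m-1)/2) n^((m-1)/(2m)) is itself exp (O(a)). *)

Lemma fact_leq_expnn n : (n`! <= n ^ n)%N.
Proof.
elim: n => // n IHn; rewrite factS expnS leq_mul2l /=.
by apply: leq_trans IHn _; case: n => // n; rewrite leq_exp2r.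
Qed.

Lemma fact_mul_leq i j : (i`! * j`! <= (i + j)`!)%N.
Proof. by rewrite -(bin_fact (leq_addr j i)) addKn leq_pmull ?bin_gt0 ?leq_addr. Qed.

Section real_inequalities.
Variable R : realType.
Implicit Types (x : R) (m n : nat).

Lemma exprnn_div_fact_le_expR n : (n%:R : R) ^+ n / n`!%:R <= expR n%:R.
Proof.
case: n => [|n]; first by rewrite expr0 fact0 divr1 expR0.
apply: le_trans (expR_ge1Dxn n (ler0n _ n.+1)); by rewrite lerDr.
Qed.

Lemma chebyshev_sum (I : finType) (u v : I -> R) :
  (forall i j, 0 <= (u i - u j) * (v i - v j)) ->
  (\sum_i u i) * (\sum_i v i) <= #|I|%:R * \sum_i u i * v i.
Proof.
move=> similar; set S := \sum_i \sum_j (u i - u j) * (v i - v j).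
have S_ge0 : 0 <= S by do 2!apply: sumr_ge0 => ? _.
suff S_eq : S = (#|I|%:R * \sum_i u i * v i - (\sum_i u i) * (\sum_i v i)) *+ 2.
  by move: S_ge0; rewrite S_eq pmulrn_lge0 // subr_ge0.
have diag : \sum_(i : I) \sum_(j : I) u j * v j = #|I|%:R * \sum_i u i * v i.
  by rewrite sumr_const mulr_natl.
have diag' : \sum_(i : I) \sum_(j : I) u i * v i = #|I|%:R * \sum_i u i * v i.
  by rewrite exchange_big.
have cross : \sum_(i : I) \sum_(j : I) u i * v j = (\sum_i u i) * (\sum_i v i).
  by rewrite mulr_suml; apply: eq_bigr => i _; rewrite mulr_sumr.
have cross' : \sum_(i : I) \sum_(j : I) u j * v i = (\sum_i u i) * (\sum_i v i).
  by rewrite exchange_big.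
have expand i j : (u i - u j) * (v i - v j) =
    (u i * v i + u j * v j) - (u i * v j + u j * v i) by ring.
rewrite /S; under eq_bigr do under eq_bigr do rewrite expand.
under eq_bigr do rewrite sumrB !big_split /=.
by rewrite sumrB !big_split /= diag diag' cross cross' mulr2n; ring.
Qed.

Lemma ln_prod (I : finType) (t : I -> R) : (forall i, 0 < t i) ->
  ln (\prod_i t i) = \sum_i ln (t i).
Proof.
move=> t_gt0; apply: expR_inj; rewrite lnK ?posrE ?prodr_gt0 // expR_sum.
by apply: eq_bigr => i _; rewrite lnK ?posrE.
Qed.

Lemma exprn_powR_invn m x : (0 < m)%N -> 0 <= x -> (x `^ m%:R^-1) ^+ m = x.
Proof.
move=> m_gt0 x_ge0; rewrite -powR_mulrn ?powR_ge0 // -powRrM mulVf ?powRr1 //.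
by rewrite pnatr_eq0 -lt0n.
Qed.

Lemma powR_invn_ge1 m x : 1 <= x -> 1 <= x `^ m%:R^-1.
Proof.
by move=> x_ge1; rewrite -[leLHS](powRr0 x); apply: ler_powR; rewrite ?invr_ge0.
Qed.

Lemma powR_invn_le m x : (0 < m)%N -> 1 <= x -> x `^ m%:R^-1 <= x.
Proof. by move=> m_gt0 x_ge1; rewrite ler1_powR // invf_le1 ?ler1n ?ltr0n. Qed.

Lemma ln_le_mul_powR_invn m x : (0 < m)%N -> 0 < x -> ln x <= m%:R * x `^ m%:R^-1.
Proof.
move=> m_gt0 x_gt0.
rewrite -{1}[x](exprn_powR_invn m_gt0 (ltW x_gt0)) lnXn ?powR_gt0 // mulr_natl.
by rewrite lerMn2r ltW ?orbT // ln_sublinear // powR_gt0.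
Qed.

Lemma powR_invn_le_mean m (t : 'I_m -> R) x : (0 < m)%N -> 0 <= x ->
  (forall i, 0 <= t i) -> x <= \prod_i t i -> x `^ m%:R^-1 <= (\sum_i t i) / m%:R.
Proof.
move=> m_gt0 x_ge0 t_ge0 le_x_prod; rewrite leNgt; apply/negP => lt_mean.
have := (@leif_AGM _ _ predT t (fun i _ => t_ge0 i)).1.
rewrite /= card_ord => le_prod_mean.
have : ((\sum_i t i) / m%:R) ^+ m < x.
  rewrite -[ltRHS](exprn_powR_invn m_gt0 x_ge0) ltrXn2r -?lt0n //.
  by rewrite divr_ge0 ?sumr_ge0.
by rewrite ltNge (le_trans le_x_prod).
Qed.

Lemma mul_ln_le_of_le_add1 (a k : R) : 1 <= a -> 1 <= k -> k <= a + 1 ->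
  k * ln k <= a * ln a + 3 * a.
Proof.
move=> a_ge1 k_ge1 k_le; have a_gt0 : 0 < a by exact: lt_le_trans a_ge1.
have ln2_le1 : ln (2 : R) <= 1 by rewrite -[2]/(1 + 1) le_ln1Dx ?ltrN10.
have ln_k_le : ln k <= 1 + ln a.
  apply: le_trans (_ : ln (2 * a) <= _).
    by rewrite ler_ln ?posrE ?mulr_gt0 // ?(lt_le_trans ltr01) //; lra.
  by rewrite lnM ?posrE // lerD2r.
have ln_a_ge0 : 0 <= ln a := ln_ge0 a_ge1.
have ln_a_le : ln a <= a by exact/ltW/ln_sublinear.
have := ler_pM (le_trans ler01 k_ge1) (ln_ge0 k_ge1) k_le ln_k_le; nra.
Qed.

Lemma exprn_div_fact_le (lam L : R) n : 0 < lam -> lam <= expR L -> (0 < n)%N ->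
  lam ^+ n / n`!%:R <= expR (n%:R * (1 + L) - n%:R * ln n%:R).
Proof.
move=> lam_gt0 lam_le n_gt0; have n_pos : (0 : R) < n%:R by rewrite ltr0n.
rewrite mulrDr mulr1 expRB expRD !expRM_natl lnK ?posrE // mulrAC mulrC.
have lam_ge0 := ltW lam_gt0.
apply: ler_pM; rewrite ?invr_ge0 ?exprn_ge0 //.
  by rewrite ler_pdivlMr ?exprn_gt0 // mulrC exprnn_div_fact_le_expR.
by apply: lerXn2r; rewrite ?nnegrE ?expR_ge0.
Qed.

Lemma prod_exprn_div_fact_le m (lam : 'I_m -> R) (L : R) (t : 'I_m -> nat) n :
  (0 < m)%N -> (forall i, 0 < lam i) -> (forall i, lam i <= expR L) ->
  (0 < n)%N -> (n <= \prod_i t i)%N -> m%:R * (1 + L) <= ln n%:R ->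
  \prod_i (lam i ^+ t i / (t i)`!%:R) <=
    expR (n%:R `^ m%:R^-1 * (m%:R * (1 + L) - ln n%:R)).
Proof.
move=> m_gt0 lam_gt0 lam_le n_gt0 n_le_prod ln_n_ge.
have t_gt0 i : (0 < t i)%N by exact: gt0_prodn (leq_trans n_gt0 n_le_prod) i isT.
have t_pos i : (0 : R) < (t i)%:R by rewrite ltr0n.
have m_pos : (0 : R) < m%:R by rewrite ltr0n.
set s := \sum_i ((t i)%:R : R).
apply: le_trans (_ : _ <= expR (s * (1 + L) - \sum_i (t i)%:R * ln (t i)%:R)) _.
  rewrite mulr_suml -sumrB expR_sum; apply: ler_prod => i _.
  rewrite divr_ge0 ?exprn_ge0 ?ltr0n ?fact_gt0 //=; last exact: ltW.
  exact: exprn_div_fact_le.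
have chebyshev : s * \sum_i ln (t i)%:R <= m%:R * \sum_i (t i)%:R * ln (t i)%:R.
  rewrite -[in m%:R](card_ord m); apply: chebyshev_sum => i j.
  have [le_ij|/ltW le_ji] := leP (t i) (t j).
    by rewrite mulr_le0 // subr_le0 ?ler_ln ?posrE // ler_nat.
  by rewrite mulr_ge0 // subr_ge0 ?ler_ln ?posrE // ler_nat.
have ln_n_le : ln (n%:R : R) <= \sum_i ln (t i)%:R.
  apply: le_trans (_ : _ <= ln (\prod_i (t i)%:R)) _; last by rewrite ln_prod.
  rewrite -natr_prod ler_ln ?posrE ?ltr0n ?ler_nat //.
  exact: leq_trans n_gt0 n_le_prod.
have mean_ge : n%:R `^ m%:R^-1 <= s / m%:R.
  by apply: powR_invn_le_mean => //; rewrite -natr_prod ler_nat.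
have entropy_ge : s / m%:R * ln n%:R <= \sum_i (t i)%:R * ln (t i)%:R.
  rewrite mulrAC ler_pdivrMr // [_ * m%:R]mulrC; apply: le_trans chebyshev.
  by apply: ler_wpM2l; rewrite ?sumr_ge0.
rewrite ler_expR; apply: le_trans (_ : s / m%:R * (m%:R * (1 + L) - ln n%:R) <= _).
  by rewrite mulrBr mulrA divfK ?gt_eqF // lerD2l lerN2.
by apply: ler_wnM2r; rewrite // subr_le0.
Qed.

End real_inequalities.

Section poisson_pmf_bounds.
Variable R : realType.

Lemma poisson_pmf_le (lam : R) k : 0 < lam -> poisson_pmf lam k <= lam ^+ k / k`!%:R.
Proof.
move=> lam_gt0; rewrite /poisson_pmf lam_gt0; apply: ler_piMr.
  by rewrite divr_ge0 ?exprn_ge0 ?ltW.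
by rewrite expR_le1 oppr_le0 ltW.
Qed.

Lemma poisson_pmf_ge (lam : R) k : 0 < lam -> (0 < k)%N ->
  expR (- (k%:R * `|ln lam|) - k%:R * ln k%:R - lam) <= poisson_pmf lam k.
Proof.
move=> lam_gt0 k_gt0; rewrite /poisson_pmf lam_gt0 !expRD.
apply: ler_pM; rewrite ?mulr_ge0 ?expR_ge0 //.
apply: ler_pM; rewrite ?expR_ge0 //.
  rewrite -[in leRHS](lnK lam_gt0) -expRM_natl ler_expR -mulrN.
  by apply: ler_wpM2l; rewrite // lerNl -normrN ler_norm.
rewrite expRN expRM_natl lnK ?posrE ?ltr0n //.
rewrite lef_pV2 ?posrE ?exprn_gt0 ?ltr0n ?fact_gt0 //.
by rewrite -natrX ler_nat fact_leq_expnn.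
Qed.

Lemma poisson_pmf_addn_le (lam : R) i j : 0 < lam ->
  poisson_pmf lam (i + j) <= lam ^+ j / j`!%:R * poisson_pmf lam i.
Proof.
move=> lam_gt0; rewrite /poisson_pmf lam_gt0 mulrA.
apply: ler_wpM2r; first exact: expR_ge0.
rewrite mulrACA -exprD addnC -invfM -natrM.
apply: ler_wpM2l; first by rewrite exprn_ge0 // ltW.
by rewrite lef_pV2 ?posrE ?ltr0n ?muln_gt0 ?fact_gt0 // ler_nat fact_mul_leq.
Qed.

Local Open Scope ereal_scope.

Lemma poisson_pmf_series (lam : R) : (0 < lam)%R ->
  \sum_(k <oo) (poisson_pmf lam k)%:E = 1.
Proof.
move=> lam_gt0; rewrite nneseries_esumT => [|k]; last by rewrite lee_fin poisson_pmf_ge0.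
have : poisson_prob lam 0 [set: nat] = 1 by exact: probability_setT.
by rewrite /poisson_prob lam_gt0.
Qed.

Lemma poisson_pmf_tail (lam : R) J : (0 < lam)%R ->
  (1 - \sum_(j < J) poisson_pmf lam j <= lam ^+ J / J`!%:R)%R.
Proof.
move=> lam_gt0; set c := (lam ^+ J / J`!%:R)%R.
have pmf_ge0 k : 0 <= (poisson_pmf lam k)%:E by rewrite lee_fin poisson_pmf_ge0.
have tail_le : \sum_(i <oo) (poisson_pmf lam (i + J))%:E <= c%:E.
  apply: le_trans (_ : \sum_(i <oo) c%:E * (poisson_pmf lam i)%:E <= _).
    apply: lee_nneseries => [k _ _|k _]; first exact: pmf_ge0.
    by rewrite -EFinM lee_fin poisson_pmf_addn_le.
  by rewrite nneseriesZl // poisson_pmf_series // mule1.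
have := poisson_pmf_series lam_gt0.
rewrite (nneseries_split 0 J) // add0n -nneseries_addn // sumEFin big_mkord => split1.
by rewrite lerBlDl -lee_fin EFinD -split1 leeD2l.
Qed.

End poisson_pmf_bounds.

Lemma measure_le_sum_cover d (T : measurableType d) (R : realType)
    (mu : {measure set T -> \bar R}) (I : finType) (Q : pred I)
    (F : I -> set T) (A : set T) :
  (forall i, measurable (F i)) -> measurable A ->
  A `<=` \bigcup_(i in [set i | Q i]) F i ->
  (mu A <= \sum_(i | Q i) mu (F i))%E.
Proof.
move=> mF mA A_sub; rewrite (bigfs _ (index_enum_uniq I)) => [|i _]; last first.
  by rewrite mem_index_enum.
by apply: content_sub_fsum => //; exact: finite_finset.
Qed.

Definition nats_below (R : realType) (J : nat) : set R := \bigcup_(j in `I_J) [set j%:R].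
Arguments nats_below {R} J.

Lemma measurable_nats_below (R : realType) J : measurable (@nats_below R J).
Proof.
by apply: fin_bigcup_measurable => [|j _]; [exact: finite_II|exact: measurable_set1].
Qed.

Section poisson_random_variable.
Context d (T : measurableType d) (R : realType) (P : probability T R).
Variables (lam : R) (Y : {RV P >-> R}).
Hypotheses (lam_gt0 : 0 < lam) (Y_poisson : poisson_distributed_RV P lam Y).

Lemma probability_nats_below J :
  P (Y @^-1` nats_below J) = (\sum_(j < J) poisson_pmf lam j)%:E.
Proof.
have disjoint : trivIset `I_J (fun j => Y @^-1` [set j%:R]).
  by move=> i j _ _ [w [/= -> /eqP]]; rewrite eqr_nat => /eqP.
rewrite preimage_bigcup measure_fin_bigcup // -fsbig_ord -sumEFin.
by apply: eq_bigr => j _; exact: Y_poisson.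
Qed.

(* Working with the complement of [nats_below J] rather than with [Y >= J]
   avoids having to show that [Y] is almost surely integer valued. *)
Lemma probability_not_nats_below J :
  (P (Y @^-1` ~` nats_below J) <= (lam ^+ J / J`!%:R)%:E)%E.
Proof.
rewrite -preimage_setC probability_setC; last first.
  exact: measurable_funPTI (measurable_nats_below J).
by rewrite probability_nats_below -EFinB lee_fin poisson_pmf_tail.
Qed.

End poisson_random_variable.

Section product_tail.
Context d (T : measurableType d) (R : realType) (P : probability T R).
Variables (m : nat) (lam : 'I_m -> R) (X : 'I_m -> {RV P >-> R}).
Hypotheses (lam_gt0 : forall i, 0 < lam i)
  (X_poisson : forall i, poisson_distributed_RV P (lam i) (X i))
  (X_indep : mutually_independent P X).

Let tail_event n := [set w | (n%:R : R) <= \prod_(i < m) X i w].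

Let measurable_tail_event n : measurable (tail_event n).
Proof.
have mprod : measurable_fun setT (fun w => \prod_(i < m) X i w).
  by apply: measurable_prod => i _; exact: measurable_funPT.
have := mprod measurableT `[n%:R, +oo[%classic (measurable_itv _); rewrite setTI.
by congr measurable; apply/seteqP; split => w /=; rewrite in_itv /= andbT.
Qed.

Lemma probability_prod_point (k : 'I_m -> nat) :
  P (\bigcap_(i in [set: 'I_m]) X i @^-1` [set (k i)%:R]) =
  (\prod_i poisson_pmf (lam i) (k i))%:E.
Proof.
rewrite X_indep => [|i]; last exact: measurable_set1.
by rewrite -prodEFin; apply: eq_bigr => i _; exact: X_poisson.
Qed.

Lemma prod_poisson_pmf_le_tail n k : (n <= k ^ m)%N ->
  ((\prod_i poisson_pmf (lam i) k)%:E <= P (tail_event n))%E.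
Proof.
move=> n_le; rewrite -(probability_prod_point (fun=> k)); apply: le_measure.
- by rewrite inE; apply: fin_bigcap_measurable.
- by rewrite inE.
move=> w /= Xw_eq_k; rewrite /tail_event /= (eq_bigr (fun=> k%:R)) => [|i _].
  by rewrite prodr_const card_ord -natrX ler_nat.
exact: Xw_eq_k.
Qed.

Lemma tail_le_sum_points n J :
  (P (tail_event n) <= (\sum_i (lam i ^+ J / J`!%:R))%:E +
    (\sum_(t : {ffun 'I_m -> 'I_J} | (n <= \prod_i t i)%N)
        \prod_i poisson_pmf (lam i) (t i))%:E)%E.
Proof.
pose Q (x : 'I_m + {ffun 'I_m -> 'I_J}) :=
  if x is inr t then (n <= \prod_i t i)%N else true.
pose F (x : 'I_m + {ffun 'I_m -> 'I_J}) :=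
  match x with
  | inl i => X i @^-1` ~` nats_below J
  | inr t => \bigcap_(i in [set: 'I_m]) X i @^-1` [set (t i : nat)%:R]
  end.
have mF x : measurable (F x).
  case: x => [i|t] /=; last exact: fin_bigcap_measurable.
  by apply: measurable_funPTI; apply: measurableC; exact: measurable_nats_below.
have cover : tail_event n `<=` \bigcup_(x in [set x | Q x]) F x.
  move=> w tail_w.
  have [[i Xi_large]|all_small] := pselect (exists i, ~ @nats_below R J (X i w)).
    by exists (inl i).
  have small i : exists j : 'I_J, X i w = (j : nat)%:R.
    apply: contrapT => no_j; apply: all_small; exists i => -[j j_lt Xj].
    by apply: no_j; exists (Ordinal j_lt).
  have [t Xt] := choice small; exists (inr [ffun i => t i]); last first.
    by move=> i _ /=; rewrite ffunE Xt.
  rewrite /= -(@ler_nat R) natr_prod (eq_bigr (fun i => X i w)) // => i _.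
  by rewrite ffunE Xt.
apply: le_trans (measure_le_sum_cover P mF (measurable_tail_event n) cover) _.
rewrite big_sumType /= -!sumEFin; apply: leeD.
  by apply: lee_sum => i _; exact: probability_not_nats_below (lam_gt0 i) (X_poisson i) J.
by apply: lee_sum => t _; rewrite probability_prod_point.
Qed.

Hypothesis m_gt0 : (0 < m)%N.

Let tail_eventE n : P (tail_event n) = (prod_tail P X n)%:E.
Proof. by rewrite fineK //; apply: fin_num_measure; exact: measurable_tail_event. Qed.

Let Lc := \sum_i `|ln (lam i)|.
Let Ls := \sum_i lam i.

Let Lc_ge0 : 0 <= Lc. Proof. by rewrite sumr_ge0. Qed.
Let Ls_ge0 : 0 <= Ls. Proof. by rewrite sumr_ge0 // => i _; exact: ltW. Qed.

Let lam_le_expR_Lc i : lam i <= expR Lc.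
Proof.
rewrite -[leLHS](lnK (lam_gt0 i)) ler_expR (le_trans (ler_norm _)) //.
by rewrite /Lc (bigD1 i) //= lerDl sumr_ge0.
Qed.

Lemma ln_prod_tail_ge n : (0 < n)%N ->
  0 < prod_tail P X n /\
  - (n%:R `^ m%:R^-1 * ln n%:R) - (2 * Lc + 3 * m%:R + Ls) * n%:R `^ m%:R^-1
    <= ln (prod_tail P X n).
Proof.
move=> n_gt0; set a := n%:R `^ m%:R^-1.
have a_ge1 : 1 <= a by apply: powR_invn_ge1; rewrite ler1n.
set k := (Num.truncn a).+1.
have a_lt_k : a < k%:R := truncnS_gt a.
have k_le : k%:R <= a + 1 by rewrite -natr1 lerD2r truncn_le (le_trans ler01).
have n_le : (n <= k ^ m)%N.
  rewrite -(ler_nat R) natrX -(exprn_powR_invn m_gt0 (ler0n _ n)) -/a.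
  apply: lerXn2r; rewrite ?nnegrE ?ler0n ?(ltW a_lt_k) //.
  exact: le_trans ler01 a_ge1.
have pmf_ge : expR (- (k%:R * Lc) - m%:R * (k%:R * ln k%:R) - Ls) <=
    \prod_i poisson_pmf (lam i) k.
  have -> : - (k%:R * Lc) - m%:R * (k%:R * ln k%:R) - Ls =
      \sum_i (- (k%:R * `|ln (lam i)|) - k%:R * ln k%:R - lam i).
    by rewrite /Lc /Ls mulr_sumr !sumrB sumrN sumr_const card_ord [m%:R * _]mulr_natl.
  rewrite expR_sum; apply: ler_prod => i _.
  by rewrite expR_ge0 poisson_pmf_ge.
have tail_ge : \prod_i poisson_pmf (lam i) k <= prod_tail P X n.
  by rewrite -lee_fin -tail_eventE prod_poisson_pmf_le_tail.
have p_ge := le_trans pmf_ge tail_ge.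
have p_gt0 := lt_le_trans (expR_gt0 _) p_ge.
have ln_p_ge : - (k%:R * Lc) - m%:R * (k%:R * ln k%:R) - Ls <= ln (prod_tail P X n).
  by rewrite -ler_expR lnK ?posrE.
split => //; apply: le_trans ln_p_ge.
have ln_n : ln (n%:R : R) = m%:R * ln a.
  by rewrite ln_powR mulrA mulfV ?mul1r // pnatr_eq0 -lt0n.
have k_ge1 : (1 : R) <= k%:R by rewrite ler1n.
have k_ln_k := mul_ln_le_of_le_add1 a_ge1 k_ge1 k_le.
have := ler_wpM2l (ler0n R m) k_ln_k.
have : k%:R * Lc <= 2 * a * Lc by apply: ler_wpM2r; [exact: Lc_ge0|lra].
have : Ls <= Ls * a by rewrite ler_peMr.
rewrite ln_n; lra.
Qed.

Lemma ln_prod_tail_le n : (0 < n)%N -> m%:R * (1 + Lc) <= ln n%:R ->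
  0 < prod_tail P X n ->
  ln (prod_tail P X n) <= - (n%:R `^ m%:R^-1 * ln n%:R)
    + (m%:R ^+ 2 + m%:R + 1 + m%:R * (1 + Lc)) * n%:R `^ m%:R^-1.
Proof.
move=> n_gt0 ln_n_ge p_gt0; set a := n%:R `^ m%:R^-1.
have n_ge1 : (1 : R) <= n%:R by rewrite ler1n.
have a_ge1 : 1 <= a := powR_invn_ge1 _ n_ge1.
have a_le_n : a <= n%:R := powR_invn_le m_gt0 n_ge1.
have ln_n_le : ln (n%:R : R) <= m%:R * a by apply: ln_le_mul_powR_invn; rewrite ?ltr0n.
have m_ge1 : (1 : R) <= m%:R by rewrite ler1n.
set B := expR (a * (m%:R * (1 + Lc) - ln n%:R)).
have tail_term i : lam i ^+ n / n`!%:R <= B.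
  apply: le_trans (exprn_div_fact_le (lam_gt0 i) (lam_le_expR_Lc i) n_gt0) _.
  have : 0 <= (n%:R - a) * (ln n%:R - m%:R * (1 + Lc)) by rewrite mulr_ge0 ?subr_ge0.
  have : 0 <= n%:R * ((m%:R - 1) * (1 + Lc)) by rewrite !mulr_ge0 ?subr_ge0 ?addr_ge0.
  rewrite ler_expR; lra.
have point_term (t : {ffun 'I_m -> 'I_n}) : (n <= \prod_i t i)%N ->
    \prod_i poisson_pmf (lam i) (t i) <= B.
  move=> n_le_prod.
  apply: le_trans
    (prod_exprn_div_fact_le m_gt0 lam_gt0 lam_le_expR_Lc n_gt0 n_le_prod ln_n_ge).
  apply: ler_prod => i _; rewrite poisson_pmf_ge0 /=; exact: poisson_pmf_le.
have p_le : prod_tail P X n <= (m + n ^ m)%:R * B.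
  have := tail_le_sum_points n n; rewrite tail_eventE -EFinD lee_fin => /le_trans; apply.
  rewrite natrD mulrDl; apply: lerD.
    apply: le_trans (ler_sum _ (fun i _ => tail_term i)) _.
    by rewrite sumr_const card_ord mulr_natl.
  apply: le_trans (_ : \sum_(t : {ffun 'I_m -> 'I_n}) B <= _).
    rewrite big_mkcond /=; apply: ler_sum => t _.
    by case: ifP => [/point_term //|_]; exact: expR_ge0.
  by rewrite sumr_const card_ffun !card_ord mulr_natl.
have count_le : ln ((m + n ^ m)%:R : R) <= (m%:R ^+ 2 + m%:R + 1) * a.
  apply: le_trans (_ : ln ((m.+1 * n ^ m)%:R : R) <= _).
    rewrite ler_ln ?posrE ?ltr0n ?addn_gt0 ?m_gt0 ?muln_gt0 ?expn_gt0 ?n_gt0 // ler_nat.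
    by rewrite mulSn addnC leq_add2l leq_pmulr // expn_gt0 n_gt0.
  rewrite natrM natrX lnM ?posrE ?ltr0n ?exprn_gt0 ?ltr0n // lnXn ?ltr0n //.
  rewrite -[ln n%:R *+ m]mulr_natl -natr1.
  have : ln (m%:R + 1 : R) <= m%:R + 1 by rewrite natr1; exact/ltW/ln_sublinear.
  have : m%:R * ln n%:R <= m%:R * (m%:R * a) by exact: ler_wpM2l.
  have : m%:R + 1 <= (m%:R + 1) * a by rewrite ler_peMr ?addr_ge0.
  lra.
have : ln (prod_tail P X n) <= ln ((m + n ^ m)%:R * B).
  by rewrite ler_ln ?posrE // (lt_le_trans p_gt0).
rewrite lnM ?posrE ?expR_gt0 ?ltr0n ?addn_gt0 ?m_gt0 // expRK; lra.
Qed.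

Lemma ln_prod_tail_asymptotic : exists C, exists N, forall n, (N <= n)%N ->
  0 < prod_tail P X n /\
  `|ln (prod_tail P X n) + n%:R `^ m%:R^-1 * ln n%:R| <= C * n%:R `^ m%:R^-1.
Proof.
exists ((m%:R ^+ 2 + m%:R + 1 + m%:R * (1 + Lc)) + (2 * Lc + 3 * m%:R + Ls)).
exists (Num.truncn (expR (m%:R * (1 + Lc)))).+1 => n N_le_n.
have n_gt0 : (0 < n)%N := leq_trans (ltn0Sn _) N_le_n.
have ln_n_ge : m%:R * (1 + Lc) <= ln (n%:R : R).
  rewrite -ler_expR lnK ?posrE ?ltr0n // ltW // (lt_le_trans (truncnS_gt _)) //.
  by rewrite ler_nat.
have [p_gt0 ln_p_ge] := ln_prod_tail_ge n_gt0.
have ln_p_le := ln_prod_tail_le n_gt0 ln_n_ge p_gt0.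
have a_ge0 : 0 <= n%:R `^ m%:R^-1 := powR_ge0 _ _.
have := Lc_ge0; have := Ls_ge0.
have : 0 <= (m%:R ^+ 2 + m%:R + 1 + m%:R * (1 + Lc)) * n%:R `^ m%:R^-1.
  by apply: mulr_ge0 => //; rewrite !addr_ge0 ?mulr_ge0 ?addr_ge0.
have : 0 <= (2 * Lc + 3 * m%:R + Ls) * n%:R `^ m%:R^-1.
  by apply: mulr_ge0 => //; rewrite !addr_ge0 ?mulr_ge0.
split => //; rewrite ler_norml; apply/andP; split; lra.
Qed.

End product_tail.

Lemma mul_expR_error_of_ln_bounds (R : realType) (p c y b b' : R) :
  0 < p -> 0 < c -> `|ln p - y| <= b -> `|ln c| <= b' ->
  exists e, `|e| <= b + b' /\ p = c * expR (y + e).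
Proof.
move=> p_gt0 c_gt0 ln_p_near ln_c_small; exists (ln p - y - ln c); split.
  by apply: le_trans (ler_normB _ _) _; exact: lerD.
have -> : y + (ln p - y - ln c) = ln p - ln c by ring.
by rewrite expRB !lnK ?posrE // mulrC divfK ?gt_eqF.
Qed.

Lemma ln_gaussian_prefactor_le (R : realType) m n : (0 < m)%N -> (0 < n)%N ->
  `|ln ((2 * pi) `^ ((m%:R - 1) / 2) * n%:R `^ ((m%:R - 1) / (2 * m%:R)))|
    <= (m%:R * `|ln (2 * pi)| + m%:R) * n%:R `^ m%:R^-1 :> R.
Proof.
move=> m_gt0 n_gt0; set a := n%:R `^ m%:R^-1.
set u := (m%:R - 1) / 2 : R; set v := (m%:R - 1) / (2 * m%:R) : R.
have m_ge1 : (1 : R) <= m%:R by rewrite ler1n.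
have n_ge1 : (1 : R) <= n%:R by rewrite ler1n.
have a_ge1 : 1 <= a := powR_invn_ge1 _ n_ge1.
have ln_n_ge0 : 0 <= ln (n%:R : R) := ln_ge0 n_ge1.
have ln_n_le : ln (n%:R : R) <= m%:R * a by apply: ln_le_mul_powR_invn; rewrite ?ltr0n.
have u_ge0 : 0 <= u by rewrite divr_ge0 ?subr_ge0.
have u_le : u <= m%:R by rewrite ler_pdivrMr //; lra.
have v_ge0 : 0 <= v by rewrite divr_ge0 ?subr_ge0 ?mulr_ge0.
have v_le1 : v <= 1 by rewrite ler_pdivrMr ?mulr_gt0 ?(lt_le_trans ltr01) //; lra.
rewrite lnM ?posrE ?powR_gt0 ?mulr_gt0 ?pi_gt0 ?ltr0n // !ln_powR.
apply: le_trans (ler_normD _ _) _.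
rewrite (normrM u) (normrM v) (ger0_norm u_ge0) (ger0_norm v_ge0) (ger0_norm ln_n_ge0).
rewrite [leRHS]mulrDl.
apply: lerD.
  have : `|ln (2 * pi : R)| <= `|ln (2 * pi : R)| * a by rewrite ler_peMr.
  have := ler_wpM2r (normr_ge0 (ln (2 * pi : R))) u_le; nra.
have := ler_wpM2r ln_n_ge0 v_le1; nra.
Qed.

Theorem theorem4 (R : realType) (d : measure_display) (T : measurableType d)
  (P : probability T R) (m : nat) (hm : (2 <= m)%N) (lam : 'I_m -> R)
  (hlam : forall i, 0 < lam i) (X : 'I_m -> {RV P >-> R})
  (hX : forall i, poisson_distributed_RV P (lam i) (X i))
  (hind : mutually_independent P X) :
  (exists C : R, exists N : nat, forall n : nat, (N <= n)%N ->
     exists e : R, `|e| <= C * (n%:R `^ (m%:R^-1)) /\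
       prod_tail P X n =
         ((2 * pi) `^ ((m%:R - 1) / 2)) * (n%:R `^ ((m%:R - 1) / (2 * m%:R)))
         * expR (- (n%:R `^ (m%:R^-1)) * ln n%:R + e))
  /\
  (exists C : R, exists N : nat, forall n : nat, (N <= n)%N ->
     `|ln (prod_tail P X n) + (n%:R `^ (m%:R^-1)) * ln n%:R|
       <= C * (n%:R `^ (m%:R^-1))).
Proof.
have m_gt0 : (0 < m)%N := ltnW hm.
have [C [N asymptotic]] := ln_prod_tail_asymptotic hlam hX hind m_gt0.
split; last by exists C, N => n /asymptotic[].
exists (C + (m%:R * `|ln (2 * pi)| + m%:R)), N.+1 => n lt_N_n.
have n_gt0 : (0 < n)%N := leq_trans (ltn0Sn _) lt_N_n.
have [p_gt0 ln_p_near] := asymptotic n (ltnW lt_N_n).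
have c_gt0 : 0 < (2 * pi) `^ ((m%:R - 1) / 2) * n%:R `^ ((m%:R - 1) / (2 * m%:R)) :> R.
  by rewrite mulr_gt0 ?powR_gt0 ?mulr_gt0 ?pi_gt0 ?ltr0n.
rewrite -[in X in `|X|](opprK (_ * ln n%:R)) -mulNr in ln_p_near.
have [e [e_le ->]] := mul_expR_error_of_ln_bounds p_gt0 c_gt0 ln_p_near
  (ln_gaussian_prefactor_le R m_gt0 n_gt0).
by exists e; rewrite mulrDl.
Qed.
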